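(* Let $G=(V,E)$ be a finite simple graph on $n$ vertices with no isolated vertex. Let $\mathcal{A}$ be the set of all graphs $G'$ with vertex set $V$ that can be obtained as follows: for each vertex $v\in V$, if $\deg_G(v)\ge 2$, choose two distinct neighbors $u,w$ of $v$ in $G$ and put the edge $uw$ into $G'$; if $\deg_G(v)=1$, put a loop on the unique neighbor of $v$ into $G'$ (an edge already present is not duplicated). Let $G'_{\min}\in\mathcal{A}$ minimize $n-\alpha(G')$ over $G'\in\mathcal{A}$. Then $$\gamma_t(G)=n-\alpha(G'_{\min})=\beta(G'_{\min}).$$
   Context: A set $S\subseteq V$ is a total dominating set of $G$ if every vertex $v\in V$ has a neighbor in $S$; $\gamma_t(G)$ is the minimum size of a total dominating set of $G$. For a graph $H$ possibly with loops, an independent set is a set of vertices containing no two endpoints of an edge and no vertex carrying a loop, and $\alpha(H)$ is the maximum size of an independent set; a vertex cover is a set of vertices meeting every edge (so it contains every vertex carrying a loop), and $\beta(H)$ is the minimum size of a vertex cover. *)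

From mathcomp Require Import all_boot.
Set Implicit Arguments. Unset Strict Implicit. Unset Printing Implicit Defensive.

Definition simple_graph (T : finType) (e : rel T) : Prop :=
  symmetric e /\ irreflexive e.

Definition no_isolated (T : finType) (e : rel T) : Prop :=
  forall v : T, exists u, e v u.

Definition deg (T : finType) (e : rel T) (v : T) : nat := #|[set u | e v u]|.

Definition total_dom (T : finType) (e : rel T) (S : {set T}) : bool :=
  [forall v, [exists u in S, e v u]].

(* gamma_t: minimum size of a total dominating set (#|T| is only a neutral
   default for minn; a total dominating set exists when there are no isolated
   vertices). *)
Definition gamma_t (T : finType) (e : rel T) : nat :=
  \big[minn/#|T|]_(S : {set T} | total_dom e S) #|S|.

(* Graphs possibly with loops on T: relations h; h x x means a loop at x. *)
Definition indep (T : finType) (h : rel T) (S : {set T}) : bool :=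
  [forall x in S, forall y in S, ~~ h x y].

Definition alpha (T : finType) (h : rel T) : nat :=
  \max_(S : {set T} | indep h S) #|S|.

Definition vcover (T : finType) (h : rel T) (S : {set T}) : bool :=
  [forall x, forall y, h x y ==> (x \in S) || (y \in S)].

Definition beta (T : finType) (h : rel T) : nat :=
  \big[minn/#|T|]_(S : {set T} | vcover h S) #|S|.

Definition admissible_choice (T : finType) (e : rel T) (c : T -> T * T) : Prop :=
  forall v : T,
    (2 <= deg e v -> (c v).1 != (c v).2 /\ e v (c v).1 /\ e v (c v).2) /\
    (deg e v = 1 -> (c v).1 = (c v).2 /\ e v (c v).1).

Definition graph_of_choice (T : finType) (c : T -> T * T) : rel T :=
  fun x y => [exists v, (c v == (x, y)) || (c v == (y, x))].

Definition in_family_A (T : finType) (e : rel T) (h : rel T) : Prop :=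
  exists c : T -> T * T, admissible_choice e c /\ h =2 graph_of_choice c.

From mathcomp Require Import all_boot.

Set Implicit Arguments.
Unset Strict Implicit.
Unset Printing Implicit Defensive.

(* Every G' in the family comes from an admissible choice c, and both entries
   of the pair c v are neighbours of v in G while forming an edge of G'; so a
   vertex cover of G' meets the neighbourhood of every vertex, i.e. it is a
   total dominating set, and gamma_t(G) <= beta(G').  Conversely, given a total
   dominating set S, every vertex may choose a pair whose first entry is a
   neighbour in S; S then covers the resulting member of the family, so the
   minimiser satisfies beta(G'_min) <= gamma_t(G).  Gallai's identity
   beta = n - alpha turns the minimality of n - alpha into that of beta. *)

Lemma geq_bigmin_cond (I : finType) (P : pred I) (F : I -> nat) d i0 :
  P i0 -> \big[minn/d]_(i | P i) F i <= F i0.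
Proof.
move=> Pi0; elim: (index_enum I) (mem_index_enum i0) => // j r IHr.
rewrite inE big_cons => /predU1P[<-|/IHr leF]; first by rewrite Pi0 geq_minl.
by case: ifP => // _; rewrite geq_min leF orbT.
Qed.

Lemma bigmin_eq_arg (I : finType) i0 (P : pred I) (F : I -> nat) d :
  P i0 -> (forall i, P i -> F i <= d) ->
  \big[minn/d]_(i | P i) F i = F [arg min_(i < i0 | P i) F i].
Proof.
move=> Pi0 leFd; case: arg_minnP => // i Pi minFi.
apply/eqP; rewrite eqn_leq geq_bigmin_cond //=.
by elim/big_ind: _ => [|m1 m2|j /minFi //]; [exact: leFd | rewrite leq_min => ->].
Qed.

Section Gallai.

Variables (T : finType) (h : rel T).

Lemma beta_le S : vcover h S -> beta h <= #|S|.
Proof. exact: geq_bigmin_cond. Qed.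

Lemma beta_attained : exists2 C, vcover h C & beta h = #|C|.
Proof.
have coverT : vcover h setT.
  by apply/forallP => x; apply/forallP => y; rewrite in_setT implybT.
exists [arg min_(C < setT | vcover h C) #|C|]; first by case: arg_minnP.
by apply: bigmin_eq_arg => // C _; apply: max_card.
Qed.

Lemma alpha_attained : exists2 I, indep h I & alpha h = #|I|.
Proof.
have indep0 : indep h set0 by apply/forall_inP => x; rewrite in_set0.
exists [arg max_(I > set0 | indep h I) #|I|]; first by case: arg_maxnP.
exact: bigmax_eq_arg.
Qed.

Lemma vcover_indepC S : vcover h S = indep h (~: S).
Proof.
apply/'forall_forallP/'forall_in_forall_inP => [cover x Sx y Sy|indepC x y].
  move: Sx Sy; rewrite !in_setC => Sx Sy.
  by apply: contra (implyP (cover x y)) _; rewrite negb_or Sx Sy.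
apply/implyP => hxy; apply: contraLR hxy => /norP[Sx Sy].
by apply: indepC; rewrite in_setC.
Qed.

Lemma beta_alpha : beta h = #|T| - alpha h.
Proof.
apply/eqP; rewrite eqn_leq; apply/andP; split.
  have [I indepI ->] := alpha_attained.
  have coverCI : vcover h (~: I) by rewrite vcover_indepC setCK.
  by rewrite (leq_trans (beta_le coverCI)) // -(cardsC I) addKn.
have [C coverC ->] := beta_attained.
rewrite vcover_indepC in coverC.
have le_alpha : #|~: C| <= alpha h := leq_bigmax_cond _ coverC.
by rewrite leq_subLR -(cardsC C) addnC leq_add2r.
Qed.

End Gallai.

(* [admissible_choice e c] unfolds to [forall v, admissible_pair e v (c v)]. *)
Definition admissible_pair (T : finType) (e : rel T) (v : T) (p : T * T) : Prop :=
  (2 <= deg e v -> p.1 != p.2 /\ e v p.1 /\ e v p.2) /\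
  (deg e v = 1 -> p.1 = p.2 /\ e v p.1).

Section TotalDomination.

Variables (T : finType) (e : rel T).

Lemma gamma_t_le S : total_dom e S -> gamma_t e <= #|S|.
Proof. exact: geq_bigmin_cond. Qed.

Lemma gamma_t_attained :
  no_isolated e -> exists2 S, total_dom e S & gamma_t e = #|S|.
Proof.
move=> no_iso; have domT : total_dom e setT.
  by apply/forallP => v; have [u evu] := no_iso v; apply/exists_inP; exists u.
exists [arg min_(S < setT | total_dom e S) #|S|]; first by case: arg_minnP.
by apply: bigmin_eq_arg => // S _; apply: max_card.
Qed.

Lemma deg_gt0 v u : e v u -> 0 < deg e v.
Proof. by move=> evu; apply/card_gt0P; exists u; rewrite inE. Qed.

Lemma deg_gt1_neighbour v x : 1 < deg e v -> exists2 y, e v y & y != x.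
Proof.
move=> deg_gt1; apply/exists_inP; apply: contraLR deg_gt1 => /exists_inPn noy.
rewrite -leqNgt -(cards1 x); apply/subset_leq_card/subsetP => y.
by rewrite !inE => evy; apply: contraR (noy y evy).
Qed.

Lemma admissible_pair_adj v p :
  0 < deg e v -> admissible_pair e v p -> e v p.1 /\ e v p.2.
Proof.
rewrite leq_eqVlt => /orP[/eqP/esym deg1 | deg_gt1] [adm2 adm1].
  by have [<- evp] := adm1 deg1.
by have [_ evp] := adm2 deg_gt1.
Qed.

Lemma admissible_pair_with v u : e v u -> exists2 p, admissible_pair e v p & p.1 = u.
Proof.
move=> evu; have := deg_gt0 evu; rewrite leq_eqVlt => /orP[/eqP/esym deg1 | deg_gt1].
  by exists (u, u) => //; split=> [|_] //; rewrite deg1.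
have [w evw wu] := deg_gt1_neighbour u deg_gt1.
exists (u, w) => //; split=> [_ | deg1]; first by rewrite eq_sym wu.
by move: deg_gt1; rewrite deg1.
Qed.

Lemma graph_of_choice_pair (c : T -> T * T) v : graph_of_choice c (c v).1 (c v).2.
Proof. by apply/existsP; exists v; rewrite -surjective_pairing eqxx. Qed.

Lemma vcover_total_dom h S :
  no_isolated e -> in_family_A e h -> vcover h S -> total_dom e S.
Proof.
move=> no_iso [c [adm_c eq_h]] coverS; apply/forallP => v.
have [u evu] := no_iso v.
have [ev1 ev2] := admissible_pair_adj (deg_gt0 evu) (adm_c v).
have := forallP (forallP coverS (c v).1) (c v).2.
rewrite eq_h graph_of_choice_pair /= => /orP[S1 | S2]; apply/exists_inP.
  by exists (c v).1.
by exists (c v).2.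
Qed.

Lemma total_dom_vcover S :
  total_dom e S -> exists2 h, in_family_A e h & vcover h S.
Proof.
move=> domS; have pair_in_S v : exists2 p, admissible_pair e v p & p.1 \in S.
  have /exists_inP[u uS evu] := forallP domS v.
  by have [p adm_p p1u] := admissible_pair_with evu; exists p; rewrite ?p1u.
have [c adm_c cS] := fin_all_exists2 pair_in_S.
exists (graph_of_choice c); first by exists c.
apply/forallP => x; apply/forallP => y; apply/implyP => /existsP[v].
by move=> /orP[] /eqP cv; have := cS v; rewrite cv /= => ->; rewrite ?orbT.
Qed.

End TotalDomination.

Theorem theorem2p2 (T : finType) (e : rel T) (h : rel T) :
  simple_graph e -> no_isolated e ->
  in_family_A e h ->
  (forall h' : rel T, in_family_A e h' -> #|T| - alpha h <= #|T| - alpha h') ->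
  gamma_t e = #|T| - alpha h /\ #|T| - alpha h = beta h.
Proof.
move=> _ no_iso hA h_min; rewrite -beta_alpha; split=> //.
have beta_min h' : in_family_A e h' -> beta h <= beta h'.
  by rewrite !beta_alpha; apply: h_min.
apply/eqP; rewrite eqn_leq; apply/andP; split.
  have [C coverC ->] := beta_attained h.
  exact: gamma_t_le (vcover_total_dom no_iso hA coverC).
have [S domS ->] := gamma_t_attained no_iso.
have [h' hA' coverS] := total_dom_vcover domS.
exact: leq_trans (beta_min h' hA') (beta_le coverS).
Qed.
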